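(* Let $q$ be a prime power and let $n,k$ be integers with $3\le k\le n-2\le q-2$. Let $\alpha_1,\dots,\alpha_n\in\mathbb{F}_q$ be pairwise distinct, and let $C_{k-1,k-2}$ be the linear code generated by the $k\times n$ matrix $G_{k-1,k-2}$ whose rows are $(\alpha_1^{e},\dots,\alpha_n^{e})$ for $e=0,1,\dots,k-3,k,k+1$. For $1\le i\le n$ let $u_i=\prod_{1\le j\le n,\,j\ne i}(\alpha_i-\alpha_j)^{-1}$, and let $\sigma_t=\sigma_t(\alpha_1,\dots,\alpha_n)$. Define $$\Lambda_i=\alpha_i^{n-k+1}-\sigma_1\alpha_i^{n-k}+\sigma_2\alpha_i^{n-k-1}-\sigma_3\alpha_i^{n-k-2},\qquad \Gamma_i=\alpha_i^{n-k}-\sigma_1\alpha_i^{n-k-1}+\sigma_2\alpha_i^{n-k-2}.$$ Then the $(n-k)\times n$ matrix $H_{k-1,k-2}$ whose rows are $(u_1\alpha_1^{j},\dots,u_n\alpha_n^{j})$ for $j=0,1,\dots,n-k-3$, followed by $(u_1\Lambda_1,\dots,u_n\Lambda_n)$ and $(u_1\Gamma_1,\dots,u_n\Gamma_n)$, is a parity-check matrix for $C_{k-1,k-2}$.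
   Context: Convention: $0^0=1$. For variables $x_1,\dots,x_m$, $\sigma_t(x_1,\dots,x_m)$ denotes the $t$-th elementary symmetric polynomial, with $\sigma_0=1$ and $\sigma_t=0$ for $t>m$. A parity-check matrix of an $[n,k]$ code $C$ is an $(n-k)\times n$ matrix of rank $n-k$ whose rows span the dual code $C^\perp$ (Euclidean inner product). *)

From HB Require Import structures.
From mathcomp Require Import all_boot all_order all_algebra.
Set Implicit Arguments. Unset Strict Implicit. Unset Printing Implicit Defensive.
Import GRing.Theory.
Local Open Scope ring_scope.

Definition esym (F : fieldType) (n t : nat) (alpha : 'I_n -> F) : F :=
  \sum_(S : {set 'I_n} | #|S| == t) \prod_(i in S) alpha i.

Definition uvec (F : fieldType) (n : nat) (alpha : 'I_n -> F) (i : 'I_n) : F :=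
  \prod_(j < n | j != i) (alpha i - alpha j)^-1.

Definition Gexp (k : nat) (r : nat) : nat := if (r < k - 2)%N then r else (r + 2)%N.

Definition Gmat (F : fieldType) (n k : nat) (alpha : 'I_n -> F) : 'M[F]_(k, n) :=
  \matrix_(r < k, i < n) alpha i ^+ Gexp k r.

Definition Lambda (F : fieldType) (n k : nat) (alpha : 'I_n -> F) (i : 'I_n) : F :=
  alpha i ^+ (n - k + 1) - esym 1 alpha * alpha i ^+ (n - k)
  + esym 2 alpha * alpha i ^+ (n - k - 1) - esym 3 alpha * alpha i ^+ (n - k - 2).

Definition Gamma (F : fieldType) (n k : nat) (alpha : 'I_n -> F) (i : 'I_n) : F :=
  alpha i ^+ (n - k) - esym 1 alpha * alpha i ^+ (n - k - 1)
  + esym 2 alpha * alpha i ^+ (n - k - 2).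

Definition Hmat (F : fieldType) (n k : nat) (alpha : 'I_n -> F) : 'M[F]_(n - k, n) :=
  \matrix_(j < n - k, i < n)
    (uvec alpha i *
     (if (val j < n - k - 2)%N then alpha i ^+ val j
      else if (val j == n - k - 2)%N then Lambda k alpha i
      else Gamma k alpha i)).

Definition is_parity_check (F : fieldType) (r m n : nat)
    (G : 'M[F]_(r, n)) (H : 'M[F]_(m, n)) : Prop :=
  \rank H = m /\
  forall v : 'rV[F]_n,
    (v <= H)%MS <-> (forall c : 'rV[F]_n, (c <= G)%MS -> c *m v^T = 0).

(* With u_i = prod_(j <> i) (alpha_i - alpha_j)^-1, Lagrange interpolation at
   the n distinct nodes gives sum_i u_i p(alpha_i) = [X^(n-1)] p whenever
   deg p < n, and this linear form vanishes on the multiples of the node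
   polynomial P = prod_i (X - alpha_i).  Row j of H is (u_i h_j(alpha_i))_i with
   h_j = X^j, X^(n-k-2) P_3 or X^(n-k-2) P_2, where P_d is the polynomial formed
   by the d+1 leading terms of P, so that Lambda_i and Gamma_i are the values
   of the last two.  The inner product of a row X^e of G with row j of H is the
   form applied to X^e h_j: either deg(X^e h_j) < n-1, or X^e h_j is a multiple
   of X^(n-d) P_d = P - (terms of degree < n-d) small enough that the remainder
   still has degree < n-1.  Both G and H evaluate polynomials of pairwise
   distinct degrees < n at distinct points, so they have full row ranks k and
   n-k, and H spans the dual of C. *)

From Pilot Require Import Defs.
From mathcomp Require Import all_boot all_order all_algebra.
From mathcomp Require Import zify ring.
Set Implicit Arguments. Unset Strict Implicit. Unset Printing Implicit Defensive.
Import GRing.Theory.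
Local Open Scope ring_scope.

Lemma lin_indep_distinct_size (R : idomainType) m (p : 'I_m -> {poly R})
    (w : 'I_m -> R) :
  injective (fun r => size (p r)) -> (forall r, p r != 0) ->
  \sum_r w r *: p r = 0 -> forall r, w r = 0.
Proof.
move=> size_inj p_neq0 sum0 r; apply/eqP/negPn/negP => wr_neq0.
have [r0 wr0_neq0 r0_max] := @arg_maxnP _ r (fun s => w s != 0)
  (fun s => size (p s)) wr_neq0.
(* Read off the coefficient of the largest degree carrying a nonzero weight. *)
have := congr1 (fun q : {poly R} => q`_(size (p r0)).-1) sum0.
rewrite /= coef_sum coef0 (bigD1 r0) //= big1 ?addr0.
  rewrite coefZ -lead_coefE => /eqP.
  by rewrite mulf_eq0 lead_coef_eq0 (negPf wr0_neq0) (negPf (p_neq0 r0)).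
move=> s s_neq_r0; rewrite coefZ.
have [->|ws_neq0] := eqVneq (w s) 0; first by rewrite mul0r.
have size_neq : size (p s) != size (p r0).
  by apply: contraNneq s_neq_r0 => /size_inj ->.
have size_pr0 : (0 < size (p r0))%N by rewrite size_poly_gt0.
have /leq_sizeP -> // : (size (p s) <= (size (p r0)).-1)%N.
  by have := r0_max s ws_neq0; move: size_neq; lia.
by rewrite mulr0.
Qed.

Lemma parity_check_by_rank (F : fieldType) r m n (G : 'M[F]_(r, n)) (H : 'M[F]_(m, n)) :
  G *m H^T = 0 -> \rank H = m -> (\rank G + m)%N = n -> is_parity_check G H.
Proof.
move=> GH0 rankH rankGH; split=> // v; split.
  case/submxP=> w -> c /submxP [c' ->].
  by rewrite trmx_mul mulmxA -(mulmxA c') GH0 mulmx0 mul0mx.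
move=> v_orth.
have Gv0 : G *m v^T = 0.
  by apply/row_matrixP => i; rewrite row_mul row0 v_orth ?row_sub.
have /andP [HK vK] : (H <= kermx G^T)%MS && (v <= kermx G^T)%MS.
  by rewrite !sub_kermx -[H]trmxK -[v]trmxK -!trmx_mul GH0 Gv0 !trmx0 !eqxx.
apply: submx_trans vK _.
have [_ <-] := mxrank_leqif_sup HK.
by rewrite mxrank_ker mxrank_tr rankH; apply/eqP; lia.
Qed.

Section Nodes.

Variables (F : fieldType) (n : nat) (alpha : 'I_n -> F).
Hypothesis alpha_inj : injective alpha.

Definition node_poly : {poly F} := \prod_(i < n) ('X - (alpha i)%:P).

Definition node_poly_except (i : 'I_n) : {poly F} :=
  \prod_(j < n | j != i) ('X - (alpha j)%:P).

Definition uform (p : {poly F}) : F := \sum_i uvec alpha i * p.[alpha i].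

Lemma poly_eq0_at_nodes (p : {poly F}) :
  (size p <= n)%N -> (forall i, p.[alpha i] = 0) -> p = 0.
Proof.
move=> size_p p_nodes; apply/eqP/negPn/negP => p_neq0.
have := max_poly_roots p_neq0 (rs := map alpha (enum 'I_n)).
rewrite size_map size_enum_ord map_inj_uniq ?enum_uniq //.
have -> : all (root p) (map alpha (enum 'I_n)).
  by apply/allP => x /mapP [i _ ->]; apply/eqP.
by move=> /(_ isT isT); rewrite leqNgt ltnS size_p.
Qed.

Lemma uvec_neq0 i : uvec alpha i != 0.
Proof.
rewrite prodf_seq_neq0; apply/allP => j _; apply/implyP => j_neq_i.
by rewrite invr_eq0 subr_eq0 (inj_eq alpha_inj) eq_sym.
Qed.

Lemma node_poly_except_monic i : node_poly_except i \is monic.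
Proof. exact: monic_prod_XsubC. Qed.

Lemma size_node_poly : size node_poly = n.+1.
Proof. by rewrite size_prod_XsubC /index_enum -enumT size_enum_ord. Qed.

Lemma size_node_poly_except i : size (node_poly_except i) = n.
Proof.
have := size_node_poly; rewrite /node_poly (bigD1 i) //= size_monicM ?monicXsubC //.
  by rewrite size_XsubC; case.
by rewrite monic_neq0 ?node_poly_except_monic.
Qed.

Lemma horner_node_poly_except i m :
  (node_poly_except i).[alpha m] = if m == i then (uvec alpha i)^-1 else 0.
Proof.
rewrite horner_prod; case: eqP => [->|/eqP m_neq_i].
  by rewrite /uvec prodfV invrK; apply: eq_bigr => j _; rewrite hornerXsubC.
by rewrite (bigD1 m) //= hornerXsubC subrr mul0r.
Qed.

(* Lagrange interpolation at the nodes. *)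
Lemma uform_coef (p : {poly F}) : (size p <= n)%N -> uform p = p`_n.-1.
Proof.
move=> size_p.
have p_interp : p = \sum_i (uvec alpha i * p.[alpha i]) *: node_poly_except i.
  apply/eqP; rewrite -subr_eq0; apply/eqP/poly_eq0_at_nodes.
    rewrite (leq_trans (size_polyD _ _)) // geq_max size_p size_polyN.
    rewrite (leq_trans (size_sum _ _ _)) //; apply/bigmax_leqP => i _.
    by rewrite (leq_trans (size_scale_leq _ _)) ?size_node_poly_except.
  move=> m; rewrite hornerD hornerN horner_sum (bigD1 m) //= big1 ?addr0.
    rewrite hornerZ horner_node_poly_except eqxx mulrAC divff ?uvec_neq0 //.
    by rewrite mul1r subrr.
  move=> i /negPf i_neq_m.
  by rewrite hornerZ horner_node_poly_except eq_sym i_neq_m mulr0.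
rewrite [in RHS]p_interp coef_sum; apply: eq_bigr => i _; rewrite coefZ.
have := node_poly_except_monic i; rewrite monicE lead_coefE size_node_poly_except.
by move=> /eqP ->; rewrite mulr1.
Qed.

Lemma uform_small (p : {poly F}) : (size p < n)%N -> uform p = 0.
Proof.
move=> size_p; rewrite uform_coef; last exact: ltnW.
by have /leq_sizeP -> // : (size p <= n.-1)%N by move: size_p; lia.
Qed.

Lemma uformD p q : uform (p + q) = uform p + uform q.
Proof. by rewrite -big_split; apply: eq_bigr => i _; rewrite hornerD mulrDr. Qed.

Lemma uformN p : uform (- p) = - uform p.
Proof. by rewrite -sumrN; apply: eq_bigr => i _; rewrite hornerN mulrN. Qed.

Lemma horner_node_poly i : node_poly.[alpha i] = 0.
Proof. by rewrite horner_prod (bigD1 i) //= hornerXsubC subrr mul0r. Qed.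

Lemma uform_node_polyM q : uform (node_poly * q) = 0.
Proof.
by rewrite /uform big1 // => i _; rewrite hornerM horner_node_poly mul0r mulr0.
Qed.

Lemma coef_node_poly m : (m <= n)%N ->
  node_poly`_m = (-1) ^+ (n - m) * Defs.esym (n - m) alpha.
Proof.
set ps := map alpha (enum 'I_n).
have size_ps : size ps = n by rewrite size_map size_enum_ord.
rewrite /node_poly -big_enum -(big_map alpha xpredT (fun x => 'X - x%:P)) -/ps.
rewrite -{1}size_ps => m_le; rewrite coef_prod_XsubC //.
move: (size ps) size_ps => N -> {m_le}; congr (_ * _).
apply: eq_bigr => I _; apply: eq_bigr => i _.
by rewrite (nth_map i) ?size_enum_ord ?nth_ord_enum.
Qed.

Lemma esym0 : Defs.esym 0 alpha = 1.
Proof.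
by rewrite /Defs.esym (big_pred1 set0) ?big_set0 // => S; rewrite /= cards_eq0.
Qed.

Definition node_head d : {poly F} := drop_poly (n - d) node_poly.

Lemma size_node_head d : (d <= n)%N -> size (node_head d) = d.+1.
Proof. by move=> d_le; rewrite size_drop_poly size_node_poly; lia. Qed.

Lemma horner_node_head d x : (d <= n)%N ->
  (node_head d).[x] =
  \sum_(t < d.+1) (-1) ^+ (d - t) * Defs.esym (d - t) alpha * x ^+ t.
Proof.
move=> d_le; rewrite horner_coef size_node_head //; apply: eq_bigr => t _.
have t_le := ltn_ord t.
rewrite coef_drop_poly coef_node_poly; last by lia.
by have -> : (n - (t + (n - d)) = d - t)%N by lia.
Qed.

(* [node_poly - node_head d * 'X^(n - d)] has size at most [n - d]. *)
Lemma uform_node_headM d m : (d <= n)%N -> (m < d)%N ->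
  uform (node_head d * 'X^(n - d + m)) = 0.
Proof.
move=> d_le m_lt; have := poly_take_drop (n - d) node_poly.
rewrite -/(node_head d) exprD mulrA => /(canRL (addKr _)) ->.
rewrite mulrDl uformD mulNr uformN uform_node_polyM addr0 uform_small ?oppr0 //.
rewrite (leq_ltn_trans (size_polyMleq _ _)) //.
by have := size_take_poly (n - d) node_poly; rewrite size_polyXn; lia.
Qed.

Lemma rank_horner_mx m (M : 'M[F]_(m, n)) (c : 'I_n -> F) (p : 'I_m -> {poly F}) :
    (forall i, c i != 0) -> (forall r, size (p r) <= n)%N ->
    injective (fun r => size (p r)) -> (forall r, p r != 0) ->
  (forall r i, M r i = c i * (p r).[alpha i]) -> \rank M = m.
Proof.
move=> c_neq0 size_p size_inj p_neq0 M_horner; apply/eqP/inj_row_free => w wM0.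
have comb0 : \sum_r w 0 r *: p r = 0.
  apply: poly_eq0_at_nodes.
    rewrite (leq_trans (size_sum _ _ _)) //; apply/bigmax_leqP => r _.
    exact: leq_trans (size_scale_leq _ _) (size_p r).
  move=> i; apply/eqP; rewrite -(mulrI_eq0 _ (lregP (c_neq0 i))).
  have /rowP /(_ i) := wM0; rewrite !mxE => <-.
  rewrite horner_sum mulr_sumr; apply/eqP/eq_bigr => r _.
  by rewrite M_horner hornerZ mulrCA.
by apply/rowP => r; rewrite mxE (lin_indep_distinct_size size_inj p_neq0 comb0).
Qed.

End Nodes.

Section ParityCheckMatrix.

Variables (F : fieldType) (n k : nat) (alpha : 'I_n -> F).
Hypotheses (alpha_inj : injective alpha) (k_ge3 : (3 <= k)%N) (k_le : (k + 2 <= n)%N).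

Local Notation a := (n - k - 2)%N.

Definition Hpoly (j : nat) : {poly F} :=
  if (j < a)%N then 'X^j
  else if j == a then node_head alpha 3 * 'X^a else node_head alpha 2 * 'X^a.

Definition Hdeg (j : nat) : nat :=
  if (j < a)%N then j else if j == a then (a + 3)%N else (a + 2)%N.

Lemma size_Hpoly j : size (Hpoly j) = (Hdeg j).+1.
Proof.
rewrite /Hpoly /Hdeg; case: ifP => _; first exact: size_polyXn.
by case: ifP => _; rewrite size_mulXn -?size_poly_eq0 size_node_head //; lia.
Qed.

Lemma Hdeg_inj (j1 j2 : 'I_(n - k)) : Hdeg j1 = Hdeg j2 -> j1 = j2.
Proof.
have := ltn_ord j1; have := ltn_ord j2; rewrite /Hdeg => j2_lt j1_lt eq_deg.
apply: ord_inj; move: eq_deg.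
case: (ltnP j1 a) => ?; [|case: (nat_of_ord j1 =P a) => ?];
  case: (ltnP j2 a) => ?; try case: (nat_of_ord j2 =P a) => ?; lia.
Qed.

Lemma Gexp_inj : injective (Gexp k).
Proof. by move=> r1 r2; rewrite /Gexp; do 2 case: ifP; lia. Qed.

Lemma Gmat_horner r i : Gmat k alpha r i = 1 * ('X^(Gexp k r)).[alpha i].
Proof. by rewrite mxE hornerXn mul1r. Qed.

Lemma Hmat_horner j i : Hmat k alpha j i = uvec alpha i * (Hpoly j).[alpha i].
Proof.
rewrite mxE /Hpoly; case: ifP => _; first by rewrite hornerXn.
rewrite /Lambda /Gamma; set b := a.
have eSb : (n - k + 1 = b + 3)%N by rewrite /b; lia.
have eb : (n - k = b + 2)%N by rewrite /b; lia.
have ePb : (n - k - 1 = b + 1)%N by rewrite /b; lia.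
case: ifP => _; rewrite ?eSb ePb eb hornerM hornerXn horner_node_head; try lia;
  by rewrite !big_ord_recr big_ord0 /= esym0 !exprD; ring.
Qed.

Lemma uform_Hpoly_mulX_Gexp r j : (r < k)%N -> (j < n - k)%N ->
  uform alpha (Hpoly j * 'X^(Gexp k r)) = 0.
Proof.
move=> r_lt j_lt.
have [|size_ge] := ltnP (size (Hpoly j * 'X^(Gexp k r))) n.
  exact: uform_small.
move: size_ge; rewrite size_mulXn -?size_poly_eq0 size_Hpoly // /Hdeg /Hpoly /Gexp.
case: (ltnP r (k - 2)) => r_ge; first by case: ifP => _; try case: ifP => _; lia.
case: (ltnP j a) => j_ge; first lia.
case: (j =P a) => _ _; rewrite -mulrA -exprD.
  have -> : (a + (r + 2) = n - 3 + (r + 3 - k))%N by lia.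
  by apply: (uform_node_headM alpha_inj); lia.
have -> : (a + (r + 2) = n - 2 + (r + 2 - k))%N by lia.
by apply: (uform_node_headM alpha_inj); lia.
Qed.

Lemma mul_Gmat_trHmat : Gmat k alpha *m (Hmat k alpha)^T = 0.
Proof.
apply/matrixP => r j; rewrite !mxE -[RHS](uform_Hpoly_mulX_Gexp (ltn_ord r) (ltn_ord j)).
apply: eq_bigr => i _.
by rewrite Gmat_horner mxE Hmat_horner hornerM hornerXn; ring.
Qed.

Lemma rank_Gmat : \rank (Gmat k alpha) = k.
Proof.
apply: (rank_horner_mx alpha_inj (fun=> oner_neq0 F) _ _ _ Gmat_horner) => [r|r1 r2|r].
- by rewrite size_polyXn /Gexp; have := ltn_ord r; case: ifP; lia.
- by rewrite !size_polyXn => -[/Gexp_inj/ord_inj].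
- by rewrite -size_poly_eq0 size_polyXn.
Qed.

Lemma rank_Hmat : \rank (Hmat k alpha) = (n - k)%N.
Proof.
apply: (rank_horner_mx alpha_inj (uvec_neq0 alpha_inj) _ _ _ Hmat_horner).
- move=> j; rewrite size_Hpoly /Hdeg; have := ltn_ord j.
  by case: ifP => _; try case: ifP => _; lia.
- by move=> j1 j2; rewrite !size_Hpoly => -[/Hdeg_inj].
- by move=> j; rewrite -size_poly_eq0 size_Hpoly.
Qed.

End ParityCheckMatrix.

Theorem theorem3p2 (F : finFieldType) (q n k : nat) (alpha : 'I_n -> F) :
  #|F| = q ->
  (3 <= k)%N -> (k <= n - 2)%N -> (n - 2 <= q - 2)%N ->
  injective alpha ->
  is_parity_check (Gmat k alpha) (Hmat k alpha).
Proof.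
move=> _ k_ge3 k_le _ alpha_inj; have k2_le : (k + 2 <= n)%N by lia.
apply: parity_check_by_rank; first exact: mul_Gmat_trHmat.
  exact: rank_Hmat.
by rewrite rank_Gmat //; lia.
Qed.
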